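(* Assume the setting in the context, with $a<t_1<\dots<t_n<b$, $n>m$, $T$ ($T[i,j]=u_j(t_i)$) of full column rank $m$, $K$ ($K[i,j]=R_1(t_i,t_j)$) invertible, $D$ diagonal with positive entries $d_i$, $\lambda>0$, and $M=K+\lambda D^{-1}$. Let $Q$ be an $n\times(n-m)$ matrix of full column rank such that $Q'T=0$ and $Q_{ij}=0$ unless $i\in\{j,j+1,\dots,j+m\}$. Then: (i) $[Q'MQ]_{kl}=0$ whenever $|k-l|>m$ (i.e. $Q'MQ$ is banded with bandwidth $m$), and in fact $[Q'KQ]_{kl}=0$ and $[Q'D^{-1}Q]_{kl}=0$ for $|k-l|>m$; (ii) the unique minimizer $(\hat\alpha,\hat\beta)$ of $(\mathbf Y-T\alpha-K\beta)'D(\mathbf Y-T\alpha-K\beta)+\lambda\beta'K\beta$ satisfies $T'\hat\beta=0$, $$\hat\beta=Q(Q'MQ)^{-1}Q'\mathbf Y,\qquad\hat\alpha=(T'T)^{-1}T'(\mathbf Y-M\hat\beta),$$ and the fitted vector $\hat{\mathbf Y}=T\hat\alpha+K\hat\beta$ equals $\mathbf Y-\lambda D^{-1}\hat\beta$.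
   Context: $[a,b]$ is a finite interval, $m\ge1$, $w_0,\dots,w_{m-1}$ continuous real functions on $[a,b]$, $(L\mu)(t)=\mu^{(m)}(t)+\sum_{j=0}^{m-1}w_j(t)\mu^{(j)}(t)$. $u_1,\dots,u_m$ are real, $m$ times differentiable functions forming a basis of $\{\mu:L\mu\equiv0\}$, with Wronskian $[W(t)]_{ij}=u_i^{(j-1)}(t)$ invertible for all $t\in[a,b]$; $(u_1^*(t),\dots,u_m^*(t))$ is the last row of $W(t)^{-1}$. The Green's function is $\mathcal G(t,u)=\sum_{i=1}^mu_i(t)u_i^*(u)$ for $u\le t$ and $0$ otherwise, and $R_1(s,t)=\int_a^b\mathcal G(s,u)\mathcal G(t,u)\,du$. $\mathbf Y=(Y_1,\dots,Y_n)'\in\mathbb R^n$. *)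

(* Small self-contained matrix layer: matrices are functions nat -> nat -> R,
   vectors nat -> R; all indices are 0-based and dimensions are explicit. *)
From Stdlib Require Import Reals Lra Lia.
Open Scope R_scope.

Fixpoint rsum (n : nat) (f : nat -> R) : R :=
  match n with O => 0 | S k => rsum k f + f k end.

Definition mat := nat -> nat -> R.
Definition vec := nat -> R.

Definition mmul (p : nat) (A B : mat) : mat :=
  fun i j => rsum p (fun k => A i k * B k j).
Definition mtr (A : mat) : mat := fun i j => A j i.
Definition madd (A B : mat) : mat := fun i j => A i j + B i j.
Definition mscale (c : R) (A : mat) : mat := fun i j => c * A i j.
Definition mid : mat := fun i j => if Nat.eqb i j then 1 else 0.
Definition diag (d : vec) : mat := fun i j => if Nat.eqb i j then d i else 0.
Definition mv (p : nat) (A : mat) (x : vec) : vec :=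
  fun i => rsum p (fun j => A i j * x j).
Definition vsub (x y : vec) : vec := fun i => x i - y i.
Definition dot (n : nat) (x y : vec) : R := rsum n (fun i => x i * y i).
Definition veq (n : nat) (x y : vec) : Prop := forall i, (i < n)%nat -> x i = y i.

Definition is_inverse (n : nat) (A B : mat) : Prop :=
  forall i j, (i < n)%nat -> (j < n)%nat ->
    mmul n A B i j = mid i j /\ mmul n B A i j = mid i j.
Definition invertible (n : nat) (A : mat) : Prop := exists B, is_inverse n A B.

Definition full_column_rank (r c : nat) (A : mat) : Prop :=
  forall x : vec, (forall i, (i < r)%nat -> mv c A x i = 0) ->
    forall j, (j < c)%nat -> x j = 0.

Definition cont_on (a b : R) (f : R -> R) : Prop :=
  forall t, a <= t <= b -> limit1_in f (fun x => a <= x <= b) (f t) t.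

(* derivative of f at t relative to [a,b] (one-sided at the endpoints) *)
Definition deriv_within (a b : R) (f : R -> R) (t l : R) : Prop :=
  limit1_in (fun x => (f x - f t) / (x - t)) (fun x => a <= x <= b /\ x <> t) l t.

(* df 0 is m times differentiable on [a,b], df k being its k-th derivative *)
Definition has_derivs (a b : R) (m : nat) (df : nat -> R -> R) : Prop :=
  forall k, (k < m)%nat -> forall t, a <= t <= b ->
    deriv_within a b (df k) t (df (S k) t).

Definition Lop (m : nat) (w : nat -> R -> R) (df : nat -> R -> R) (t : R) : R :=
  df m t + rsum m (fun j => w j t * df j t).

(* u i k = k-th derivative of u_(i+1); Wronskian [W(t)]_{ij} = u_i^{(j)}(t) *)
Definition wronskian (u : nat -> nat -> R -> R) (t : R) : mat :=
  fun i j => u i j t.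

Definition green (m : nat) (u : nat -> nat -> R -> R) (ustar : nat -> R -> R)
  (t s : R) : R :=
  if Rle_dec s t then rsum m (fun i => u i O t * ustar i s) else 0.

Definition Tmat (u : nat -> nat -> R -> R) (t : nat -> R) : mat :=
  fun i j => u j O (t i).

Definition Dinv (d : vec) : mat := diag (fun i => / d i).
Definition Mmat (K : mat) (lam : R) (d : vec) : mat := madd K (mscale lam (Dinv d)).

Definition QtAQ (n : nat) (Q A : mat) : mat := mmul n (mmul n (mtr Q) A) Q.

Definition pls_obj (n m : nat) (Y : vec) (T K D : mat) (lam : R) (al be : vec) : R :=
  let r := fun i => Y i - mv m T al i - mv n K be i in
  dot n r (mv n D r) + lam * dot n be (mv n K be).

Definition is_minimizer (n m : nat) (Y : vec) (T K D : mat) (lam : R) (al be : vec) : Prop :=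
  forall al' be', pls_obj n m Y T K D lam al be <= pls_obj n m Y T K D lam al' be'.

From Stdlib Require Import Reals Lra Lia.
From mathcomp Require all_boot all_algebra Rstruct.
Open Scope R_scope.

(* Let G_i = G(t_i, .) be the Green's function sections at the knots, so that
   K is the Gram matrix K_ij = int_a^b G_i G_j.  Then x'Ky = int (sum x_i G_i)
   (sum y_j G_j): K is symmetric positive semidefinite, hence positive
   definite since it is invertible.

   (i) Column k of Q gives F_k = sum_i Q_ik G_i.  For s < t_k every G_i with
   Q_ik <> 0 is given by sum_j u_j(t_i) u*_j(s), so Q'T = 0 forces F_k(s) = 0;
   for s > t_(k+m) all these G_i vanish.  Thus F_k F_l = 0 when |k-l| > m,
   and [Q'KQ]_kl = int F_k F_l = 0; Q'D^-1 Q is banded since Q is.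

   (ii) Completing the square: if T'b0 = 0 and Y = T a0 + M b0, the objective
   at (a0+da, b0+db) exceeds its value at (a0, b0) by
   sum_i d_i (T da + K db)_i^2 + lam db'K db, so (a0, b0) is the unique
   minimizer.  Such a pair is b0 = Q (Q'MQ)^-1 Q'Y, a0 = (T'T)^-1 T'(Y - M b0):
   Q'(Y - M b0) = 0, and ker Q' = range T because the square block matrix
   [T Q] has independent columns. *)

Lemma rsum_ext n f g : (forall i, (i < n)%nat -> f i = g i) -> rsum n f = rsum n g.
Proof.
  induction n; intros H; simpl; auto.
  rewrite IHn by (intros; apply H; lia). rewrite H by lia. reflexivity.
Qed.

Lemma rsum_plus n f g : rsum n (fun i => f i + g i) = rsum n f + rsum n g.
Proof. induction n; simpl; [ring | rewrite IHn; ring]. Qed.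

Lemma rsum_minus n f g : rsum n (fun i => f i - g i) = rsum n f - rsum n g.
Proof. induction n; simpl; [ring | rewrite IHn; ring]. Qed.

Lemma rsum_scal n c f : rsum n (fun i => c * f i) = c * rsum n f.
Proof. induction n; simpl; [ring | rewrite IHn; ring]. Qed.

Lemma rsum_zero n f : (forall i, (i < n)%nat -> f i = 0) -> rsum n f = 0.
Proof.
  intros H; rewrite (rsum_ext n f (fun _ => 0)) by auto.
  clear H; induction n; simpl; [ring | rewrite IHn; ring].
Qed.

Lemma rsum_swap n p (f : nat -> nat -> R) :
  rsum n (fun i => rsum p (fun j => f i j)) = rsum p (fun j => rsum n (fun i => f i j)).
Proof.
  induction n; simpl.
  - symmetry; apply rsum_zero; auto.
  - rewrite IHn, <- rsum_plus. reflexivity.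
Qed.

Lemma rsum_nonneg n f : (forall i, (i < n)%nat -> 0 <= f i) -> 0 <= rsum n f.
Proof.
  induction n; intros H; simpl; [lra|].
  assert (0 <= rsum n f) by (apply IHn; intros; apply H; lia).
  assert (0 <= f n) by (apply H; lia). lra.
Qed.

Lemma rsum_nonneg_eq0 n f : (forall i, (i < n)%nat -> 0 <= f i) -> rsum n f = 0 ->
  forall i, (i < n)%nat -> f i = 0.
Proof.
  induction n; intros H E i Hi; [lia|]. simpl in E.
  assert (0 <= rsum n f) by (apply rsum_nonneg; intros; apply H; lia).
  assert (0 <= f n) by (apply H; lia).
  destruct (Nat.eq_dec i n) as [->|ne]; [lra|].
  apply IHn; [intros; apply H; lia | lra | lia].
Qed.

Lemma rsum_single n f k : (k < n)%nat -> (forall i, (i < n)%nat -> i <> k -> f i = 0) ->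
  rsum n f = f k.
Proof.
  induction n; intros Hk H; [lia|]. simpl.
  destruct (Nat.eq_dec k n) as [->|ne].
  - rewrite rsum_zero; [ring|]. intros; apply H; lia.
  - rewrite IHn by (try lia; intros; apply H; lia). rewrite (H n) by lia. ring.
Qed.

Lemma rsum_split m p f : rsum (m + p) f = rsum m f + rsum p (fun k => f (m + k)%nat).
Proof.
  induction p; simpl.
  - rewrite Nat.add_0_r; ring.
  - rewrite Nat.add_succ_r; simpl; rewrite IHp; ring.
Qed.

Lemma mv_ext p A x y : (forall j, (j < p)%nat -> x j = y j) -> forall i, mv p A x i = mv p A y i.
Proof. intros H i; unfold mv; apply rsum_ext; intros; rewrite H; auto. Qed.

Lemma mv_mmul p q A B x i : mv p (mmul q A B) x i = mv q A (mv p B x) i.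
Proof.
  unfold mv, mmul.
  transitivity (rsum p (fun j => rsum q (fun k => A i k * (B k j * x j)))).
  - apply rsum_ext; intros j _. rewrite Rmult_comm, <- rsum_scal. apply rsum_ext; intros; ring.
  - rewrite rsum_swap. apply rsum_ext; intros k _. rewrite rsum_scal. reflexivity.
Qed.

Lemma mv_lin p A x y c i : mv p A (fun j => x j + c * y j) i = mv p A x i + c * mv p A y i.
Proof. unfold mv. rewrite <- rsum_scal, <- rsum_plus. apply rsum_ext; intros; ring. Qed.

Lemma mv_minus n A x y i : mv n A (vsub x y) i = mv n A x i - mv n A y i.
Proof. unfold mv, vsub. rewrite <- rsum_minus. apply rsum_ext; intros; ring. Qed.

Lemma mv_madd n A B x i : mv n (madd A B) x i = mv n A x i + mv n B x i.
Proof. unfold mv, madd. rewrite <- rsum_plus. apply rsum_ext; intros; ring. Qed.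

Lemma mv_mscale n c A x i : mv n (mscale c A) x i = c * mv n A x i.
Proof. unfold mv, mscale. rewrite <- rsum_scal. apply rsum_ext; intros; ring. Qed.

Lemma mv_Mmat n K lam d x i : mv n (Mmat K lam d) x i = mv n K x i + lam * mv n (Dinv d) x i.
Proof. unfold Mmat. rewrite mv_madd, mv_mscale. reflexivity. Qed.

Lemma mv_diag n f x i : (i < n)%nat -> mv n (diag f) x i = f i * x i.
Proof.
  intros Hi; unfold mv. rewrite (rsum_single n _ i Hi).
  - unfold diag; rewrite Nat.eqb_refl; ring.
  - intros j _ ne; unfold diag. destruct (Nat.eqb_spec i j); [lia|ring].
Qed.

Lemma mv_mid n x i : (i < n)%nat -> mv n mid x i = x i.
Proof. intros Hi. rewrite <- (Rmult_1_l (x i)). exact (mv_diag n (fun _ => 1) x i Hi). Qed.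

Lemma mv_trunc p n A z i : (p <= n)%nat -> (forall j, (p <= j < n)%nat -> z j = 0) ->
  mv n A z i = mv p A z i.
Proof.
  intros Hpn Hz. unfold mv. replace n with (p + (n - p))%nat at 1 by lia.
  rewrite rsum_split, (rsum_zero (n - p)); [ring|].
  intros k Hk. rewrite Hz by lia. ring.
Qed.

Lemma inv_left n A B x i : is_inverse n A B -> (i < n)%nat -> mv n B (mv n A x) i = x i.
Proof.
  intros H Hi. rewrite <- mv_mmul, <- (mv_mid n x i Hi).
  unfold mv; apply rsum_ext; intros j Hj. destruct (H i j Hi Hj) as [_ ->]. reflexivity.
Qed.

Lemma inv_right n A B x i : is_inverse n A B -> (i < n)%nat -> mv n A (mv n B x) i = x i.
Proof.
  intros H Hi. rewrite <- mv_mmul, <- (mv_mid n x i Hi).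
  unfold mv; apply rsum_ext; intros j Hj. destruct (H i j Hi Hj) as [-> _]. reflexivity.
Qed.

Lemma QtAQ_mv n p Q A y k : mv p (QtAQ n Q A) y k = mv n (mtr Q) (mv n A (mv p Q y)) k.
Proof. unfold QtAQ. rewrite mv_mmul. apply mv_mmul. Qed.

Lemma dot_ext_r n x z z' : (forall i, (i < n)%nat -> z i = z' i) -> dot n x z = dot n x z'.
Proof. intros H; unfold dot; apply rsum_ext; intros; rewrite H; auto. Qed.

Lemma dot_lin_l n x y c z : dot n (fun i => x i + c * y i) z = dot n x z + c * dot n y z.
Proof. unfold dot. rewrite <- rsum_scal, <- rsum_plus. apply rsum_ext; intros; ring. Qed.

Lemma dot_lin_r n x z c w : dot n x (fun i => z i + c * w i) = dot n x z + c * dot n x w.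
Proof. unfold dot. rewrite <- rsum_scal, <- rsum_plus. apply rsum_ext; intros; ring. Qed.

Lemma dot_mv_tr n m x A y : dot n x (mv m A y) = dot m (mv n (mtr A) x) y.
Proof.
  unfold dot, mv, mtr.
  transitivity (rsum n (fun i => rsum m (fun j => x i * A i j * y j))).
  - apply rsum_ext; intros i _. rewrite <- rsum_scal. apply rsum_ext; intros; ring.
  - rewrite rsum_swap. apply rsum_ext; intros j _.
    rewrite Rmult_comm, <- rsum_scal. apply rsum_ext; intros; ring.
Qed.

Lemma dot_sq_eq0 n x : dot n x x = 0 -> forall i, (i < n)%nat -> x i = 0.
Proof.
  intros H i Hi. assert (x i * x i = 0).
  { apply (rsum_nonneg_eq0 n (fun i => x i * x i)); auto; intros; nra. }
  nra.
Qed.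

Lemma QtAQ_dot n Q A k l : QtAQ n Q A k l = dot n (fun i => Q i k) (mv n A (fun j => Q j l)).
Proof.
  unfold QtAQ, mmul, mtr, dot, mv.
  transitivity (rsum n (fun i => rsum n (fun j => Q j k * A j i * Q i l))).
  - apply rsum_ext; intros. rewrite Rmult_comm, <- rsum_scal. apply rsum_ext; intros; ring.
  - rewrite rsum_swap. apply rsum_ext; intros. rewrite <- rsum_scal. apply rsum_ext; intros; ring.
Qed.

Definition symmetric (n : nat) (A : mat) : Prop :=
  forall i j, (i < n)%nat -> (j < n)%nat -> A i j = A j i.
Definition psd (n : nat) (A : mat) : Prop := forall x, 0 <= dot n x (mv n A x).
Definition pd (n : nat) (A : mat) : Prop :=
  psd n A /\ forall x, dot n x (mv n A x) = 0 -> forall i, (i < n)%nat -> x i = 0.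

Lemma dot_sym n A x y : symmetric n A -> dot n x (mv n A y) = dot n y (mv n A x).
Proof.
  intros HA. unfold dot, mv.
  transitivity (rsum n (fun i => rsum n (fun j => x i * A i j * y j))).
  - apply rsum_ext; intros. rewrite <- rsum_scal; apply rsum_ext; intros; ring.
  - rewrite rsum_swap. apply rsum_ext; intros j Hj.
    rewrite <- rsum_scal; apply rsum_ext; intros i Hi. rewrite (HA i j); auto; ring.
Qed.

Lemma quadratic_nonneg_linear_coef c q : (forall tau, 0 <= 2 * tau * c + tau * tau * q) -> c = 0.
Proof.
  intros H.
  assert (Hq : 0 <= q) by (pose proof (H 1); pose proof (H (-1)); lra).
  set (tau := - c / (q + 1)).
  assert (Htau : tau * (q + 1) = - c) by (unfold tau; field; lra).
  pose proof (H tau). assert (tau = 0) by nra. nra.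
Qed.

Lemma psd_isotropic_kernel n A x : symmetric n A -> psd n A ->
  dot n x (mv n A x) = 0 -> forall i, (i < n)%nat -> mv n A x i = 0.
Proof.
  intros Hsym Hpsd H0. set (y := mv n A x).
  apply dot_sq_eq0. fold y.
  transitivity (dot n y (mv n A x)); [reflexivity|].
  apply (quadratic_nonneg_linear_coef _ (dot n y (mv n A y))). intros tau.
  pose proof (Hpsd (fun i => x i + tau * y i)) as Hq.
  rewrite (dot_ext_r n _ _ (fun i => mv n A x i + tau * mv n A y i)) in Hq
    by (intros; apply mv_lin).
  rewrite dot_lin_l, !dot_lin_r, H0, (dot_sym n A x y Hsym) in Hq. lra.
Qed.

Lemma invertible_psd_pd n A : symmetric n A -> psd n A -> invertible n A -> pd n A.
Proof.
  intros Hsym Hpsd [B HB]. split; [exact Hpsd|]. intros x H0 i Hi.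
  rewrite <- (inv_left n A B x i HB Hi). unfold mv at 1. apply rsum_zero; intros j Hj.
  rewrite (psd_isotropic_kernel n A x Hsym Hpsd H0 j Hj). ring.
Qed.

Lemma diag_psd n e : (forall i, (i < n)%nat -> 0 <= e i) -> psd n (diag e).
Proof.
  intros He x. unfold dot. apply rsum_nonneg; intros i Hi.
  rewrite mv_diag by exact Hi. pose proof (He i Hi). nra.
Qed.

Lemma pd_add_psd n A B c : pd n A -> psd n B -> 0 <= c -> pd n (madd A (mscale c B)).
Proof.
  intros [HA0 HA] HB Hc.
  assert (E : forall x, dot n x (mv n (madd A (mscale c B)) x)
                       = dot n x (mv n A x) + c * dot n x (mv n B x)).
  { intros x. rewrite <- dot_lin_r. apply dot_ext_r; intros.
    rewrite mv_madd, mv_mscale. reflexivity. }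
  split.
  - intros x. rewrite E. pose proof (HA0 x). pose proof (HB x). nra.
  - intros x Hx. apply HA. rewrite E in Hx. pose proof (HA0 x). pose proof (HB x). nra.
Qed.

Lemma congruence_full_rank n p Q A : pd n A -> full_column_rank n p Q ->
  full_column_rank p p (QtAQ n Q A).
Proof.
  intros [_ HA] HQ y Hy. apply HQ. apply HA.
  rewrite <- (dot_mv_tr p n y (mtr Q)). unfold dot; apply rsum_zero; intros k Hk.
  rewrite <- QtAQ_mv, Hy by exact Hk. ring.
Qed.

Lemma gram_full_rank r c A : full_column_rank r c A -> full_column_rank c c (mmul r (mtr A) A).
Proof.
  intros HA x Hx. apply HA. apply dot_sq_eq0.
  rewrite <- (dot_mv_tr c r x (mtr A)). unfold dot; apply rsum_zero; intros j Hj.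
  rewrite <- mv_mmul, Hx by exact Hj. ring.
Qed.

Module Rank.
Import all_boot all_algebra Rstruct.
Import GRing.Theory.
Local Open Scope ring_scope.

Lemma rsum_big N (f : nat -> R) : rsum N f = \sum_(i < N) f i.
Proof.
elim: N => [|N IH] /=; first by rewrite big_ord0.
by rewrite big_ord_recr /= IH.
Qed.

Definition ext {N} (v : 'I_N -> R) (k : nat) : R :=
  match insub k with Some k' => v k' | None => 0 end.

Lemma extE {N} v (k : 'I_N) : ext v k = v k.
Proof. by rewrite /ext valK. Qed.

Lemma extE' {N} v {k} (Hk : (k < N)%coq_nat) : ext v k = v (Ordinal (introT ltP Hk)).
Proof.
rewrite /ext; case: insubP => [k' _ Hk'|]; last by move=> /negP; case; apply/ltP.
by congr v; apply: val_inj; rewrite Hk'.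
Qed.

Lemma ext_out {N} v k : (N <= k)%N -> ext (N := N) v k = 0.
Proof. by move=> Hk; rewrite /ext insubN // -leqNgt. Qed.

Lemma midE {N i j} (Hi : (i < N)%coq_nat) (Hj : (j < N)%coq_nat) :
  mid i j = (1%:M : 'M[R]_N) (Ordinal (introT ltP Hi)) (Ordinal (introT ltP Hj)).
Proof.
rewrite mxE /mid -[_ == _]/(i == j)%N.
by case: Nat.eqb_spec => [->|ne]; [rewrite eqxx | case: eqP].
Qed.

Lemma full_rank_inverse N (A : mat) : full_column_rank N N A ->
  exists B, is_inverse N A B /\ forall i j, (N <= i)%coq_nat -> B i j = 0.
Proof.
move=> H.
pose M := \matrix_(i < N, j < N) A i j.
have key : forall p (v : 'M[R]_(N, p)), M *m v = 0 -> v = 0.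
  move=> p v Hv; apply/matrixP => i j.
  have := H (ext (fun k => v k j)) _ i (elimT ltP (ltn_ord i)).
  rewrite extE => ->; first by rewrite mxE.
  move=> k Hk.
  rewrite /mv rsum_big.
  transitivity ((M *m v) (Ordinal (introT ltP Hk)) j); last by rewrite Hv mxE.
  rewrite mxE; apply: eq_bigr => l _; by rewrite mxE extE.
have Hu : M \in unitmx.
  rewrite -unitmx_tr -row_free_unit -kermx_eq0; apply/eqP.
  apply: trmx_inj; rewrite trmx0; apply: key.
  by rewrite -[M in M *m _]trmxK -trmx_mul mulmx_ker trmx0.
exists (fun i j => ext (fun i' => ext (fun j' => invmx M i' j') j) i); split.
- move=> i j Hi Hj; split.
  + rewrite (midE Hi Hj) -(mulmxV Hu) mxE /mmul rsum_big.
    apply: eq_bigr => k _; by rewrite mxE extE (extE' _ Hj).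
  + rewrite (midE Hi Hj) -(mulVmx Hu) mxE /mmul rsum_big.
    apply: eq_bigr => k _; by rewrite mxE (extE' _ Hi) extE.
- by move=> i j /leP Hi; rewrite ext_out.
Qed.
End Rank.

Definition is_int (a b : R) (f : R -> R) (v : R) : Prop :=
  exists pr : Riemann_integrable f a b, RiemannInt pr = v.

Lemma is_int_lin a b f g v w c : is_int a b f v -> is_int a b g w ->
  is_int a b (fun s => f s + c * g s) (v + c * w).
Proof.
  intros [p1 e1] [p2 e2].
  exists (RiemannInt_P10 c p1 p2). rewrite RiemannInt_P13 with (pr1 := p1) (pr2 := p2).
  subst; reflexivity.
Qed.

Lemma is_int_zero a b : is_int a b (fun _ => 0) 0.
Proof.
  exists (RiemannInt_P14 a b 0).
  etransitivity; [apply (RiemannInt_P15 (RiemannInt_P14 a b 0)) | ring].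
Qed.

Lemma is_int_ext a b f g v : a <= b -> is_int a b f v -> (forall s, f s = g s) -> is_int a b g v.
Proof.
  intros hab [p e] H.
  assert (pg : Riemann_integrable g a b) by (apply Riemann_integrable_ext with f; auto).
  exists pg. rewrite <- e. symmetry; apply RiemannInt_P18; auto.
Qed.

Lemma is_int_unique a b f v w : is_int a b f v -> is_int a b f w -> v = w.
Proof. intros [p1 e1] [p2 e2]. subst. apply RiemannInt_P5. Qed.

Lemma is_int_nonneg a b f v : a <= b -> is_int a b f v ->
  (forall s, a < s < b -> 0 <= f s) -> 0 <= v.
Proof.
  intros hab [p e] H. subst.
  replace 0 with (RiemannInt (RiemannInt_P14 a b 0)).
  - apply RiemannInt_P19; auto.
  - etransitivity; [apply (RiemannInt_P15 (RiemannInt_P14 a b 0)) | ring].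
Qed.

Lemma is_int_rsum a b p (F : nat -> R -> R) (V c : nat -> R) :
  (forall j, (j < p)%nat -> is_int a b (F j) (V j)) ->
  is_int a b (fun s => rsum p (fun j => c j * F j s)) (rsum p (fun j => c j * V j)).
Proof.
  induction p; intros H; simpl.
  - apply is_int_zero.
  - apply (is_int_lin a b (fun s => rsum p (fun j => c j * F j s)) (F p)).
    + apply IHp; intros; apply H; lia.
    + apply H; lia.
Qed.

(** * Gram matrices of families of functions *)

Section Gram.
Variables (a b : R) (n : nat) (g : nat -> R -> R) (K : mat).
Hypothesis hab : a <= b.
Hypothesis HK : forall i j, (i < n)%nat -> (j < n)%nat ->
  is_int a b (fun s => g i s * g j s) (K i j).

Definition comb (x : vec) (s : R) : R := rsum n (fun i => x i * g i s).

Lemma gram_bilinear x y : is_int a b (fun s => comb x s * comb y s) (dot n x (mv n K y)).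
Proof.
  assert (Hrow : forall i, (i < n)%nat ->
     is_int a b (fun s => g i s * comb y s) (mv n K y i)).
  { intros i Hi.
    replace (mv n K y i) with (rsum n (fun j => y j * K i j))
      by (unfold mv; apply rsum_ext; intros; ring).
    apply is_int_ext with (fun s => rsum n (fun j => y j * (g i s * g j s))); auto.
    - apply is_int_rsum. intros; apply HK; auto.
    - intros s. unfold comb. rewrite <- rsum_scal. apply rsum_ext; intros; ring. }
  apply is_int_ext with (fun s => rsum n (fun i => x i * (g i s * comb y s))); auto.
  - apply is_int_rsum; auto.
  - intros s. unfold comb. rewrite Rmult_comm, <- rsum_scal. apply rsum_ext; intros; ring.
Qed.

Lemma gram_symmetric : symmetric n K.
Proof.
  intros i j Hi Hj. apply (is_int_unique a b (fun s => g i s * g j s)); auto.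
  apply is_int_ext with (fun s => g j s * g i s); auto. intros; ring.
Qed.

Lemma gram_psd : psd n K.
Proof. intros x. apply (is_int_nonneg a b _ _ hab (gram_bilinear x x)). intros; nra. Qed.

Lemma gram_disjoint_support x y : (forall s, comb x s * comb y s = 0) ->
  dot n x (mv n K y) = 0.
Proof.
  intros H. apply (is_int_unique a b (fun s => comb x s * comb y s)).
  - apply gram_bilinear.
  - apply is_int_ext with (fun _ => 0); auto using is_int_zero.
Qed.
End Gram.

(** * Supports of combinations of Green's function sections *)

Section GreenSupport.
Variables (m : nat) (u : nat -> nat -> R -> R) (ustar : nat -> R -> R)
  (n : nat) (t : nat -> R) (Q : mat).
Hypothesis Htinc : forall i, (S i < n)%nat -> t i < t (S i).

Lemma knots_increasing i j : (i <= j)%nat -> (j < n)%nat -> t i <= t j.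
Proof.
  intros Hij Hj. induction j.
  - replace i with O by lia. lra.
  - destruct (Nat.eq_dec i (S j)) as [->|ne]; [lra|].
    pose proof (Htinc j Hj). assert (t i <= t j) by (apply IHj; lia). lra.
Qed.

Let G (i : nat) (s : R) : R := green m u ustar (t i) s.

(* Left of its first knot t_l, a combination annihilating the basis u_j at the
   knots vanishes: there G(t_i, s) = sum_j u_j(t_i) u*_j(s) for every i >= l. *)
Lemma green_comb_left l s :
  (forall i, (i < l)%nat -> Q i l = 0) ->
  (forall j, (j < m)%nat -> mmul n (mtr Q) (Tmat u t) l j = 0) ->
  s < t l -> comb n G (fun i => Q i l) s = 0.
Proof.
  intros Hlow HQT Hs. unfold comb.
  transitivity (rsum n (fun i => rsum m (fun j => ustar j s * (Q i l * u j O (t i))))).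
  - apply rsum_ext; intros i Hi.
    destruct (Compare_dec.le_dec l i) as [Hli|Hli].
    + unfold G, green. destruct (Rle_dec s (t i)) as [_|Hn].
      * rewrite <- rsum_scal. apply rsum_ext; intros; ring.
      * exfalso; apply Hn. pose proof (knots_increasing l i Hli Hi). lra.
    + rewrite Hlow by lia. rewrite rsum_zero; [ring|]. intros; ring.
  - rewrite rsum_swap. apply rsum_zero; intros j Hj.
    rewrite rsum_scal. change (ustar j s * mmul n (mtr Q) (Tmat u t) l j = 0).
    rewrite HQT by exact Hj. ring.
Qed.

(* Right of its last knot t_(k+m), a combination vanishes since G(t_i, s) = 0 for s > t_i. *)
Lemma green_comb_right k s : (k + m < n)%nat ->
  (forall i, (k + m < i < n)%nat -> Q i k = 0) ->
  t (k + m) < s -> comb n G (fun i => Q i k) s = 0.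
Proof.
  intros Hk Hup Hs. unfold comb. apply rsum_zero; intros i Hi.
  destruct (Compare_dec.le_dec i (k + m)) as [H1|H1].
  - unfold G, green. destruct (Rle_dec s (t i)) as [Hr|_]; [|ring].
    pose proof (knots_increasing i (k + m) H1 Hk). lra.
  - rewrite Hup by lia. ring.
Qed.

Hypothesis HQT : forall k j, (k < n - m)%nat -> (j < m)%nat -> mmul n (mtr Q) (Tmat u t) k j = 0.
Hypothesis HQband : forall i j, (i < n)%nat -> (j < n - m)%nat -> ~ (j <= i <= j + m)%nat ->
  Q i j = 0.

Lemma green_comb_disjoint k l s : (k < n - m)%nat -> (l < n - m)%nat -> (k + m < l)%nat ->
  comb n G (fun i => Q i k) s * comb n G (fun i => Q i l) s = 0.
Proof.
  intros Hk Hl Hkl. destruct (Rlt_dec s (t l)) as [Hs|Hs].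
  - rewrite (green_comb_left l s); [ring | | | exact Hs].
    + intros i Hi. apply HQband; lia.
    + intros j Hj. apply HQT; assumption.
  - rewrite (green_comb_right k s); [ring | lia | |].
    + intros i Hi. apply HQband; lia.
    + assert (t (k + m) < t l).
      { apply Rlt_le_trans with (t (S (k + m))); [apply Htinc; lia|].
        apply knots_increasing; lia. }
      lra.
Qed.

Lemma QtKQ_band a b K k l : a <= b ->
  (forall i j, (i < n)%nat -> (j < n)%nat -> is_int a b (fun s => G i s * G j s) (K i j)) ->
  (k < n - m)%nat -> (l < n - m)%nat -> (k + m < l \/ l + m < k)%nat -> QtAQ n Q K k l = 0.
Proof.
  intros hab HK Hk Hl Hkl. rewrite QtAQ_dot.
  apply (gram_disjoint_support a b n G K hab HK). intros s.
  destruct Hkl.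
  - apply green_comb_disjoint; assumption.
  - rewrite Rmult_comm. apply green_comb_disjoint; assumption.
Qed.
End GreenSupport.

Lemma QtDQ_band n m Q e k l : (k < n - m)%nat -> (l < n - m)%nat ->
  (forall i j, (i < n)%nat -> (j < n - m)%nat -> ~ (j <= i <= j + m)%nat -> Q i j = 0) ->
  (k + m < l \/ l + m < k)%nat -> QtAQ n Q (diag e) k l = 0.
Proof.
  intros Hk Hl HQ Hkl. rewrite QtAQ_dot. unfold dot; apply rsum_zero; intros i Hi.
  rewrite mv_diag by exact Hi.
  destruct (Compare_dec.le_dec k i); destruct (Compare_dec.le_dec i (k + m));
  first [ rewrite (HQ i k) by lia; ring | rewrite (HQ i l) by lia; ring ].
Qed.

Lemma QtAQ_Mmat n Q K lam d k l :
  QtAQ n Q (Mmat K lam d) k l = QtAQ n Q K k l + lam * QtAQ n Q (Dinv d) k l.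
Proof.
  rewrite !QtAQ_dot, <- dot_lin_r. apply dot_ext_r; intros. apply mv_Mmat.
Qed.

(** * Penalized least squares *)

Section PenalizedLeastSquares.
Variables (n m : nat) (Y : vec) (T K : mat) (d : vec) (lam : R).
Hypothesis Ksym : symmetric n K.

Let obj := pls_obj n m Y T K (diag d) lam.

Lemma pls_obj_sum al be : obj al be =
  rsum n (fun i => d i * Rsqr (Y i - mv m T al i - mv n K be i) + lam * (be i * mv n K be i)).
Proof.
  unfold obj, pls_obj, dot. rewrite rsum_plus, rsum_scal. f_equal.
  apply rsum_ext; intros i Hi. rewrite mv_diag by exact Hi. unfold Rsqr; ring.
Qed.

(* Completing the square around a pair satisfying the normal equations
   T'b0 = 0 and d_i (Y - T a0 - K b0)_i = lam b0_i. *)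
Lemma pls_obj_expand al0 be0 al be :
  (forall j, (j < m)%nat -> mv n (mtr T) be0 j = 0) ->
  (forall i, (i < n)%nat -> d i * (Y i - mv m T al0 i - mv n K be0 i) = lam * be0 i) ->
  obj al be = obj al0 be0
    + rsum n (fun i => d i * Rsqr (mv m T (vsub al al0) i + mv n K (vsub be be0) i))
    + lam * dot n (vsub be be0) (mv n K (vsub be be0)).
Proof.
  intros HTbe0 Hnormal.
  set (db := vsub be be0).
  (* the cross terms sum to zero *)
  assert (HT : dot n be0 (mv m T (vsub al al0)) = 0).
  { rewrite dot_mv_tr. unfold dot. apply rsum_zero; intros j Hj. rewrite HTbe0; auto; ring. }
  assert (HK : dot n db (mv n K be0) = dot n be0 (mv n K db)) by (apply dot_sym; auto).
  rewrite !pls_obj_sum.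
  transitivity (rsum n (fun i =>
      (d i * Rsqr (Y i - mv m T al0 i - mv n K be0 i) + lam * (be0 i * mv n K be0 i))
      + d i * Rsqr (mv m T (vsub al al0) i + mv n K db i) + lam * (db i * mv n K db i)
      + lam * (-2 * (be0 i * mv m T (vsub al al0) i) - be0 i * mv n K db i
               + db i * mv n K be0 i))).
  - apply rsum_ext; intros i Hi. unfold db. rewrite !mv_minus. unfold vsub.
    pose proof (Hnormal i Hi) as Hi'. unfold Rsqr.
    assert (E : forall x y, x - y = -2 * (mv m T al i - mv m T al0 i + (mv n K be i - mv n K be0 i))
                  * (d i * (Y i - mv m T al0 i - mv n K be0 i) - lam * be0 i) -> x = y)
      by (intros; rewrite Hi' in *; lra).
    apply E. ring.
  - rewrite !rsum_plus, !rsum_scal.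
    rewrite rsum_plus, rsum_minus, rsum_scal.
    unfold dot in HT, HK |- *. fold db. rewrite HT, HK. ring.
Qed.

Hypothesis Hd : forall i, (i < n)%nat -> 0 < d i.

Lemma fitted_normal_equation al0 be0 :
  (forall i, (i < n)%nat -> Y i = mv m T al0 i + mv n (Mmat K lam d) be0 i) ->
  forall i, (i < n)%nat -> d i * (Y i - mv m T al0 i - mv n K be0 i) = lam * be0 i.
Proof.
  intros HY i Hi. rewrite HY, mv_Mmat by exact Hi. unfold Dinv. rewrite mv_diag by exact Hi.
  field. apply Rgt_not_eq, Hd, Hi.
Qed.

Hypothesis Kpd : pd n K.
Hypothesis Hlam : 0 < lam.
Hypothesis HTrank : full_column_rank n m T.

Lemma weighted_sq_nonneg (s : vec) : 0 <= rsum n (fun i => d i * Rsqr (s i)).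
Proof.
  apply rsum_nonneg; intros i Hi. apply Rmult_le_pos; [apply Rlt_le, Hd, Hi | apply Rle_0_sqr].
Qed.

Lemma weighted_sq_eq0 (s : vec) : rsum n (fun i => d i * Rsqr (s i)) = 0 ->
  forall i, (i < n)%nat -> s i = 0.
Proof.
  intros H i Hi. apply Rsqr_0_uniq.
  assert (E : d i * Rsqr (s i) = 0).
  { apply (rsum_nonneg_eq0 n (fun i => d i * Rsqr (s i))); auto.
    intros j Hj. apply Rmult_le_pos; [apply Rlt_le, Hd, Hj | apply Rle_0_sqr]. }
  destruct (Rmult_integral _ _ E) as [E1|E1]; auto. pose proof (Hd i Hi). lra.
Qed.

Theorem pls_unique_minimizer al0 be0 :
  (forall j, (j < m)%nat -> mv n (mtr T) be0 j = 0) ->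
  (forall i, (i < n)%nat -> Y i = mv m T al0 i + mv n (Mmat K lam d) be0 i) ->
  is_minimizer n m Y T K (diag d) lam al0 be0 /\
  forall al be, is_minimizer n m Y T K (diag d) lam al be -> veq m al al0 /\ veq n be be0.
Proof.
  intros HTbe0 HY.
  pose proof (fun al be =>
    pls_obj_expand al0 be0 al be HTbe0 (fitted_normal_equation al0 be0 HY)) as Hexp.
  destruct Kpd as [Kpsd Kdef].
  split.
  - intros al be. unfold obj in Hexp. rewrite (Hexp al be).
    pose proof (weighted_sq_nonneg (fun i => mv m T (vsub al al0) i + mv n K (vsub be be0) i)).
    pose proof (Rmult_le_pos _ _ (Rlt_le _ _ Hlam) (Kpsd (vsub be be0))). lra.
  - intros al be Hmin. specialize (Hmin al0 be0). unfold obj in Hexp. rewrite (Hexp al be) in Hmin.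
    pose proof (weighted_sq_nonneg (fun i => mv m T (vsub al al0) i + mv n K (vsub be be0) i)) as H1.
    pose proof (Kpsd (vsub be be0)) as H2.
    assert (Hdb : forall i, (i < n)%nat -> vsub be be0 i = 0) by (apply Kdef; nra).
    assert (HKdb : forall i, mv n K (vsub be be0) i = 0).
    { intros i. unfold mv. apply rsum_zero; intros j Hj. rewrite Hdb by exact Hj. ring. }
    assert (Hda : forall j, (j < m)%nat -> vsub al al0 j = 0).
    { apply HTrank. intros i Hi.
      transitivity (mv m T (vsub al al0) i + mv n K (vsub be be0) i); [rewrite HKdb; ring|].
      apply (weighted_sq_eq0 (fun i => mv m T (vsub al al0) i + mv n K (vsub be be0) i)); [nra | exact Hi]. }
    split; intros i Hi; [pose proof (Hda i Hi) | pose proof (Hdb i Hi)]; unfold vsub in *; lra.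
Qed.
End PenalizedLeastSquares.

(** * The closed-form solution *)

Section ClosedForm.
Variables (n m : nat) (T Q A : mat) (Y : vec).
Hypothesis Hmn : (m <= n)%nat.
Hypothesis HTrank : full_column_rank n m T.
Hypothesis HQrank : full_column_rank n (n - m) Q.
Hypothesis HQT : forall k j, (k < n - m)%nat -> (j < m)%nat -> mmul n (mtr Q) T k j = 0.

Lemma Tt_Q_zero z j : (j < m)%nat -> mv n (mtr T) (mv (n - m) Q z) j = 0.
Proof.
  intros Hj. rewrite <- mv_mmul. unfold mv at 1. apply rsum_zero; intros k Hk.
  replace (mmul n (mtr T) Q j k) with (mmul n (mtr Q) T k j)
    by (unfold mmul, mtr; apply rsum_ext; intros; ring).
  rewrite HQT by assumption. ring.
Qed.

Lemma Qt_T_zero x k : (k < n - m)%nat -> mv n (mtr Q) (mv m T x) k = 0.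
Proof.
  intros Hk. rewrite <- mv_mmul. unfold mv at 1. apply rsum_zero; intros j Hj.
  rewrite HQT by assumption. ring.
Qed.

Definition block_TQ : mat := fun i j => if Nat.ltb j m then T i j else Q i (j - m)%nat.

Lemma block_TQ_mv z i :
  mv n block_TQ z i = mv m T z i + mv (n - m) Q (fun k => z (m + k)%nat) i.
Proof.
  unfold mv at 1. replace n with (m + (n - m))%nat at 1 by lia.
  rewrite rsum_split. f_equal.
  - apply rsum_ext; intros j Hj. unfold block_TQ. destruct (Nat.ltb_spec j m); [reflexivity|lia].
  - apply rsum_ext; intros k Hk. unfold block_TQ. destruct (Nat.ltb_spec (m + k) m); [lia|].
    replace (m + k - m)%nat with k by lia. reflexivity.
Qed.

(* The columns of T and Q together are independent, since Q'T = 0. *)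
Lemma block_TQ_full_rank : full_column_rank n n block_TQ.
Proof.
  intros z Hz.
  assert (Hx : forall j, (j < m)%nat -> z j = 0).
  { apply (gram_full_rank n m T HTrank). intros j Hj. rewrite mv_mmul.
    rewrite (mv_ext n (mtr T) _ (vsub (mv n block_TQ z) (mv (n - m) Q (fun k => z (m + k)%nat))))
      by (intros i Hi; unfold vsub; rewrite block_TQ_mv; ring).
    rewrite mv_minus, Tt_Q_zero by exact Hj.
    unfold mv at 1. rewrite rsum_zero; [ring|]. intros i Hi. rewrite Hz by exact Hi. ring. }
  assert (Hy : forall k, (k < n - m)%nat -> z (m + k)%nat = 0).
  { apply HQrank. intros i Hi. rewrite <- (Hz i Hi), block_TQ_mv.
    replace (mv m T z i) with 0; [ring|].
    symmetry; unfold mv; apply rsum_zero; intros j Hj. rewrite Hx by exact Hj. ring. }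
  intros j Hj. destruct (Nat.ltb_spec j m).
  - apply Hx; assumption.
  - replace j with (m + (j - m))%nat by lia. apply Hy. lia.
Qed.

Lemma Qt_kernel_in_range_T e : (forall k, (k < n - m)%nat -> mv n (mtr Q) e k = 0) ->
  exists x, forall i, (i < n)%nat -> e i = mv m T x i.
Proof.
  intros He. destruct (Rank.full_rank_inverse n block_TQ block_TQ_full_rank) as [P [HP _]].
  set (z := mv n P e).
  assert (Hz : forall i, (i < n)%nat ->
            e i = mv m T z i + mv (n - m) Q (fun k => z (m + k)%nat) i).
  { intros i Hi. rewrite <- block_TQ_mv. symmetry. apply inv_right; assumption. }
  exists z. intros i Hi.
  assert (HQy : forall i, (i < n)%nat -> mv (n - m) Q (fun k => z (m + k)%nat) i = 0).
  { apply dot_sq_eq0. rewrite dot_mv_tr. unfold dot. apply rsum_zero; intros k Hk.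
    rewrite (mv_ext n (mtr Q) _ (vsub e (mv m T z)))
      by (intros i' Hi'; unfold vsub; rewrite (Hz i' Hi'); ring).
    rewrite mv_minus, He, Qt_T_zero by exact Hk. ring. }
  rewrite Hz, HQy by exact Hi. ring.
Qed.

Variables (B C : mat).
Hypothesis HB : is_inverse (n - m) (QtAQ n Q A) B.
Hypothesis HC : is_inverse m (mmul n (mtr T) T) C.

Definition pls_beta : vec := mv (n - m) Q (mv (n - m) B (mv n (mtr Q) Y)).
Definition pls_alpha : vec := mv m C (mv n (mtr T) (vsub Y (mv n A pls_beta))).

Lemma pls_beta_orthogonal j : (j < m)%nat -> mv n (mtr T) pls_beta j = 0.
Proof. apply Tt_Q_zero. Qed.

Lemma pls_closed_form_fits i : (i < n)%nat -> Y i = mv m T pls_alpha i + mv n A pls_beta i.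
Proof.
  intros Hi. set (e := vsub Y (mv n A pls_beta)).
  assert (He : forall k, (k < n - m)%nat -> mv n (mtr Q) e k = 0).
  { intros k Hk. unfold e. rewrite mv_minus. unfold pls_beta.
    rewrite <- QtAQ_mv, inv_right by assumption. ring. }
  destruct (Qt_kernel_in_range_T e He) as [x Hx].
  assert (Hal : forall j, (j < m)%nat -> pls_alpha j = x j).
  { intros j Hj. unfold pls_alpha. fold e.
    rewrite (mv_ext m C _ (mv m (mmul n (mtr T) T) x)).
    - apply inv_left; assumption.
    - intros j' Hj'. rewrite mv_mmul. apply mv_ext. exact Hx. }
  rewrite (mv_ext m T _ _ Hal), <- Hx by exact Hi. unfold e, vsub. ring.
Qed.
End ClosedForm.

Theorem pls_minimizer_closed_form n m Y T K Q d lam :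
  (m <= n)%nat -> full_column_rank n m T -> full_column_rank n (n - m) Q ->
  (forall k j, (k < n - m)%nat -> (j < m)%nat -> mmul n (mtr Q) T k j = 0) ->
  symmetric n K -> pd n K -> (forall i, (i < n)%nat -> 0 < d i) -> 0 < lam ->
  (exists al be, is_minimizer n m Y T K (diag d) lam al be) /\
  (forall al be al' be',
     is_minimizer n m Y T K (diag d) lam al be ->
     is_minimizer n m Y T K (diag d) lam al' be' ->
     veq m al al' /\ veq n be be') /\
  (forall al be, is_minimizer n m Y T K (diag d) lam al be ->
     (forall j, (j < m)%nat -> mv n (mtr T) be j = 0) /\
     (exists B, is_inverse (n - m) (QtAQ n Q (Mmat K lam d)) B /\
        veq n be (mv n Q (mv (n - m) B (mv n (mtr Q) Y)))) /\
     (exists C, is_inverse m (mmul n (mtr T) T) C /\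
        veq m al (mv m C (mv n (mtr T) (vsub Y (mv n (Mmat K lam d) be))))) /\
     (forall i, (i < n)%nat -> mv m T al i + mv n K be i = Y i - lam * mv n (Dinv d) be i)).
Proof.
  intros Hmn HT HQ HQT Ksym Kpd Hd Hlam.
  set (M := Mmat K lam d).
  assert (Mpd : pd n M).
  { apply pd_add_psd; [exact Kpd | | lra].
    apply diag_psd. intros i Hi. apply Rlt_le, Rinv_0_lt_compat, Hd, Hi. }
  destruct (Rank.full_rank_inverse _ _ (congruence_full_rank n (n - m) Q M Mpd HQ))
    as [B [HB HBout]].
  destruct (Rank.full_rank_inverse _ _ (gram_full_rank n m T HT)) as [C [HC _]].
  set (al0 := pls_alpha n m T Q M Y B C). set (be0 := pls_beta n m Q Y B).
  assert (Hfit : forall i, (i < n)%nat -> Y i = mv m T al0 i + mv n M be0 i)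
    by exact (pls_closed_form_fits n m T Q M Y Hmn HT HQ HQT B C HB HC).
  destruct (pls_unique_minimizer n m Y T K d lam Ksym Hd Kpd Hlam HT al0 be0
              (pls_beta_orthogonal n m T Q Y HQT B) Hfit) as [Hmin Huniq].
  split; [exists al0, be0; exact Hmin|]. split.
  { intros al be al' be' H H'. destruct (Huniq _ _ H) as [Ha Hb], (Huniq _ _ H') as [Ha' Hb'].
    split; intros i Hi; rewrite ?Ha, ?Ha', ?Hb, ?Hb' by exact Hi; reflexivity. }
  intros al be Hm. destruct (Huniq al be Hm) as [Ha Hb].
  split; [|split; [|split]].
  - intros j Hj. rewrite (mv_ext n (mtr T) be be0 Hb). apply pls_beta_orthogonal; assumption.
  - exists B. split; [exact HB|]. intros i Hi. rewrite Hb by exact Hi.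
    symmetry. apply mv_trunc; [lia|]. intros j Hj. unfold mv.
    apply rsum_zero; intros k Hk. rewrite (HBout j k) by lia. apply Rmult_0_l.
  - exists C. split; [exact HC|]. intros j Hj. rewrite Ha by exact Hj.
    apply mv_ext; intros j' Hj'. apply mv_ext; intros i Hi. unfold vsub.
    rewrite (mv_ext n M be be0 Hb). reflexivity.
  - intros i Hi. rewrite (mv_ext m T al al0 Ha), (mv_ext n K be be0 Hb), (mv_ext n (Dinv d) be be0 Hb).
    rewrite (Hfit i Hi). unfold M. rewrite mv_Mmat. ring.
Qed.

Theorem mainTheorem11
  (a b : R) (m : nat) (w : nat -> R -> R) (u : nat -> nat -> R -> R)
  (ustar : nat -> R -> R) (n : nat) (t : nat -> R) (K : mat) (d : vec)
  (lam : R) (Q : mat) (Y : vec) :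
  (* setting *)
  a < b -> (1 <= m)%nat ->
  (forall j, (j < m)%nat -> cont_on a b (w j)) ->
  (forall i, (i < m)%nat -> has_derivs a b m (u i)) ->
  (forall i, (i < m)%nat -> forall s, a <= s <= b -> Lop m w (u i) s = 0) ->
  (forall c : vec, (forall s, a <= s <= b -> rsum m (fun i => c i * u i O s) = 0) ->
     forall i, (i < m)%nat -> c i = 0) ->
  (forall dmu : nat -> R -> R, has_derivs a b m dmu ->
     (forall s, a <= s <= b -> Lop m w dmu s = 0) ->
     exists c : vec, forall s, a <= s <= b -> dmu O s = rsum m (fun i => c i * u i O s)) ->
  (forall s, a <= s <= b -> exists Wi, is_inverse m (wronskian u s) Wi /\
     forall i, (i < m)%nat -> ustar i s = Wi (m - 1)%nat i) ->
  (* data *)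
  a < t O -> (forall i, (S i < n)%nat -> t i < t (S i)) -> t (n - 1)%nat < b ->
  (m < n)%nat ->
  full_column_rank n m (Tmat u t) ->
  (forall i j, (i < n)%nat -> (j < n)%nat ->
     exists pr : Riemann_integrable
       (fun s => green m u ustar (t i) s * green m u ustar (t j) s) a b,
     K i j = RiemannInt pr) ->
  invertible n K ->
  (forall i, (i < n)%nat -> 0 < d i) ->
  0 < lam ->
  full_column_rank n (n - m) Q ->
  (forall k j, (k < n - m)%nat -> (j < m)%nat -> mmul n (mtr Q) (Tmat u t) k j = 0) ->
  (forall i j, (i < n)%nat -> (j < n - m)%nat -> ~ (j <= i <= j + m)%nat -> Q i j = 0) ->
  (* (i) *)
  (forall k l, (k < n - m)%nat -> (l < n - m)%nat -> (k + m < l \/ l + m < k)%nat ->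
     QtAQ n Q (Mmat K lam d) k l = 0 /\ QtAQ n Q K k l = 0 /\ QtAQ n Q (Dinv d) k l = 0)
  /\
  (* (ii) *)
  (exists al be, is_minimizer n m Y (Tmat u t) K (diag d) lam al be) /\
  (forall al be al' be',
     is_minimizer n m Y (Tmat u t) K (diag d) lam al be ->
     is_minimizer n m Y (Tmat u t) K (diag d) lam al' be' ->
     veq m al al' /\ veq n be be') /\
  (forall al be, is_minimizer n m Y (Tmat u t) K (diag d) lam al be ->
     (forall j, (j < m)%nat -> mv n (mtr (Tmat u t)) be j = 0) /\
     (exists B, is_inverse (n - m) (QtAQ n Q (Mmat K lam d)) B /\
        veq n be (mv n Q (mv (n - m) B (mv n (mtr Q) Y)))) /\
     (exists C, is_inverse m (mmul n (mtr (Tmat u t)) (Tmat u t)) C /\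
        veq m al (mv m C (mv n (mtr (Tmat u t)) (vsub Y (mv n (Mmat K lam d) be))))) /\
     (forall i, (i < n)%nat ->
        mv m (Tmat u t) al i + mv n K be i = Y i - lam * mv n (Dinv d) be i)).
Proof.
  intros hab _ _ _ _ _ _ _ _ Htinc _ Hmn HT HKint HKinv Hd Hlam HQ HQT HQband.
  assert (HKgram : forall i j, (i < n)%nat -> (j < n)%nat ->
    is_int a b (fun s => green m u ustar (t i) s * green m u ustar (t j) s) (K i j)).
  { intros i j Hi Hj. destruct (HKint i j Hi Hj) as [pr E]. exists pr. symmetry; exact E. }
  assert (hab' : a <= b) by lra.
  assert (Ksym := gram_symmetric a b n _ K hab' HKgram).
  assert (Kpd := invertible_psd_pd n K Ksym (gram_psd a b n _ K hab' HKgram) HKinv).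
  split.
  - intros k l Hk Hl Hkl.
    assert (HK0 := QtKQ_band m u ustar n t Q Htinc HQT HQband a b K k l hab' HKgram Hk Hl Hkl).
    assert (HD0 := QtDQ_band n m Q (fun i => / d i) k l Hk Hl HQband Hkl).
    rewrite QtAQ_Mmat. unfold Dinv. rewrite HK0, HD0. repeat split; ring.
  - apply pls_minimizer_closed_form; auto with arith.
Qed.
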